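(* Let $m,g>0$ and $\epsilon\geq 0$. Consider the planar taut-cable tethered UAV model described in the context, and let $\mathcal{S}_\epsilon$ denote its set of attainable equilibria with safety margin $\epsilon$. Then $\mathcal{S}_\epsilon$ consists exactly of the triples $(\bar r,\bar\alpha,\bar\theta)$ satisfying $\bar r>0$, $\bar\alpha\in[0,\pi]$ and \[ \begin{cases} \bar\theta\in\left(\bar\theta_\epsilon(\bar\alpha),\ \frac{\pi}{2}-\bar\alpha\right) & \text{if } \bar\alpha\in\left[0,\frac{\pi}{2}\right),\\ \bar\theta=0 & \text{if } \bar\alpha=\frac{\pi}{2},\\ \bar\theta\in\left(\frac{\pi}{2}-\bar\alpha,\ \bar\theta_\epsilon(\bar\alpha)\right) & \text{if } \bar\alpha\in\left(\frac{\pi}{2},\pi\right], \end{cases} \] where \[ \bar\theta_\epsilon(\bar\alpha)=\begin{cases}\arctan\left(\frac{\epsilon}{mg\cos\bar\alpha}+\tan\bar\alpha\right)-\bar\alpha & \text{if } \bar\alpha\in\left[0,\frac{\pi}{2}\right),\\[2pt] \arctan\left(\frac{\epsilon}{mg\cos\bar\alpha}+\tan\bar\alpha\right)+\pi-\bar\alpha & \text{if } \bar\alpha\in\left(\frac{\pi}{2},\pi\right],\end{cases} \] with $\arctan$ the principal branch with values in $(-\pi/2,\pi/2)$. Moreover, the cable tension at equilibrium is $\bar T=mg\left(\tan(\bar\alpha+\bar\theta)\cos\bar\alpha-\sin\bar\alpha\right)$ if $\bar\alpha\in[0,\pi]\setminus\{\pi/2\}$, while if $\bar\alpha=\pi/2$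 the equilibrium tension can be any value in $\mathbb{R}_{>0}$ (depending on the constant thrust).
   Context: Model: a planar UAV of mass $m>0$ and moment of inertia $\mathcal{J}>0$, subject to gravity $g>0$, is connected to the ground by a taut cable wound on a winch of radius $\rho>0$ and moment of inertia $\mathcal{I}>0$. Its polar coordinates are the radial position $r>0$ and elevation angle $\alpha\in[0,\pi]$; its pitch angle is $\theta\in(-\pi,\pi]$. Inputs are total thrust $u_1\geq 0$, torque $u_2\in\mathbb{R}$ and winch torque $u_3\in\mathbb{R}$. The taut-cable dynamics are \[ \ddot r=\tfrac{\rho}{\mathcal I}u_3+\tfrac{\rho^2}{\mathcal I}T,\quad \ddot\alpha=-\tfrac{1}{r}\left(2\dot r\dot\alpha+g\cos\alpha\right)+\tfrac{1}{mr}u_1\cos(\alpha+\theta),\quad \ddot\theta=\tfrac{1}{\mathcal J}u_2, \] where the cable tension is $T=mr\dot\alpha^2-mg\sin\alpha+u_1\sin(\alpha+\theta)-m\ddot r$. A triple $(\bar r,\bar\alpha,\bar\theta)$ with $\bar r>0$, $\bar\alpha\in[0,\pi]$, $\bar\theta\in(-\pi,\pi]$ is an equilibrium if there are constant inputs $\bar u_1\geq0,\bar u_2,\bar u_3$ for which the constant trajectory $(r,\alpha,\theta)\equiv(\bar r,\bar\alpha,\bar\theta)$ solves the dynamics; the corresponding equilibrium tension is $\bar T=\bar u_1\sin(\bar\alpha+\bar\theta)-mg\sin\bar\alpha$. Given $\epsilon\geq 0$, the set of attainable equilibria $\mathcal{S}_\epsilon$ is the set of equilibria $(\bar r,\bar\alpha,\bar\theta)$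 admitting such constant inputs with $\bar T>\epsilon$. *)

From Stdlib Require Import Reals.
From Coquelicot Require Import Coquelicot.
Open Scope R_scope.

(* Physical parameters: mass m, inertia J (UAV), gravity g,
   winch radius rho and winch inertia Iw. *)

Definition tension (m g : R) (r a th ad rdd u1 : R) : R :=
  m * r * ad ^ 2 - m * g * sin a + u1 * sin (a + th) - m * rdd.

Definition solves_dynamics (m J g rho Iw : R) (r a th : R -> R) (u1 u2 u3 : R)
  : Prop :=
  exists rd ad thd rdd add thdd : R -> R,
    forall t : R,
      is_derive r t (rd t) /\ is_derive rd t (rdd t) /\
      is_derive a t (ad t) /\ is_derive ad t (add t) /\
      is_derive th t (thd t) /\ is_derive thd t (thdd t) /\
      rdd t = rho / Iw * u3
              + rho ^ 2 / Iw * tension m g (r t) (a t) (th t) (ad t) (rdd t) u1 /\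
      add t = - (1 / r t) * (2 * rd t * ad t + g * cos (a t))
              + 1 / (m * r t) * u1 * cos (a t + th t) /\
      thdd t = 1 / J * u2.

Definition equilibrium_inputs (m J g rho Iw : R) (rb ab thb u1 u2 u3 : R) : Prop :=
  0 <= u1 /\
  solves_dynamics m J g rho Iw (fun _ => rb) (fun _ => ab) (fun _ => thb) u1 u2 u3.

Definition eq_tension (m g : R) (ab thb u1 : R) : R :=
  u1 * sin (ab + thb) - m * g * sin ab.

Definition state_domain (rb ab thb : R) : Prop :=
  0 < rb /\ 0 <= ab <= PI /\ - PI < thb <= PI.

Definition attainable (m J g rho Iw eps : R) (rb ab thb : R) : Prop :=
  state_domain rb ab thb /\
  exists u1 u2 u3 : R,
    equilibrium_inputs m J g rho Iw rb ab thb u1 u2 u3 /\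
    eps < eq_tension m g ab thb u1.

(* The boundary angle theta_eps(alpha) (only used for alpha <> PI/2). *)
Definition theta_eps (m g eps ab : R) : R :=
  if Rlt_dec ab (PI / 2)
  then atan (eps / (m * g * cos ab) + tan ab) - ab
  else atan (eps / (m * g * cos ab) + tan ab) + PI - ab.

From Stdlib Require Import Reals Lra.
From Coquelicot Require Import Coquelicot.
Open Scope R_scope.

(* At an equilibrium every derivative vanishes, so the inputs are forced:
   u2 = 0, u3 = -rho T, and the thrust balances gravity across the cable,
   u1 cos(alpha + theta) = m g cos alpha.  Off the vertical this fixes
   u1 = m g cos alpha / cos(alpha + theta), asks cos(alpha + theta) to have the
   sign of cos alpha, and gives T = m g (tan(alpha + theta) cos alpha - sin alpha);
   T > eps then says that tan(alpha + theta) lies above or below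
   K = eps / (m g cos alpha) + tan alpha according to that sign, and atan inverts
   this on the branch of alpha + theta where the cosine has the required sign.
   On the vertical the balance forces sin theta = 0 and a positive tension
   forces cos theta > 0, so theta = 0, while u1 = T + m g stays free. *)

Lemma cos_gt_0_iff (x : R) :
  - (3 * (PI / 2)) <= x <= 3 * (PI / 2) ->
  (0 < cos x <-> - (PI / 2) < x < PI / 2).
Proof.
  intros hx. split.
  - intros hc. split.
    + destruct (Rlt_or_le (- (PI / 2)) x) as [h|h]; [exact h|].
      rewrite <- cos_neg in hc. pose proof (cos_le_0 (- x) ltac:(lra) ltac:(lra)). lra.
    + destruct (Rlt_or_le x (PI / 2)) as [h|h]; [exact h|].
      pose proof (cos_le_0 x h ltac:(lra)). lra.
  - intros [h1 h2]. apply cos_gt_0; lra.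
Qed.

Lemma tan_add_PI (x : R) : tan (x + PI) = tan x.
Proof.
  unfold tan. rewrite neg_sin, neg_cos, Rdiv_opp_r, Rdiv_opp_l. apply Ropp_involutive.
Qed.

Lemma atan_lt_iff (y x : R) :
  - (PI / 2) < x < PI / 2 -> (atan y < x <-> y < tan x).
Proof.
  intros hx. pose proof (atan_bound y). split; intros h.
  - rewrite <- (tan_atan y). apply tan_increasing; lra.
  - rewrite <- (atan_tan x hx). now apply atan_increasing.
Qed.

Lemma lt_atan_iff (y x : R) :
  - (PI / 2) < x < PI / 2 -> (x < atan y <-> tan x < y).
Proof.
  intros hx. pose proof (atan_bound y). split; intros h.
  - rewrite <- (tan_atan y). apply tan_increasing; lra.
  - rewrite <- (atan_tan x hx). now apply atan_increasing.
Qed.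

Lemma cos_neq_0_of_neq_PI2 (a : R) : 0 <= a <= PI -> a <> PI / 2 -> cos a <> 0.
Proof.
  intros ha hne.
  destruct (total_order_T a (PI / 2)) as [[h|h]|h]; [|contradiction|].
  - assert (0 < cos a) by (apply cos_gt_0; lra). lra.
  - assert (cos a < 0) by (apply cos_lt_0; lra). lra.
Qed.

Lemma is_derive_const_eq_0 (c t l : R) : is_derive (fun _ : R => c) t l -> l = 0.
Proof.
  intros H. rewrite <- (is_derive_unique _ _ _ H). apply Derive_const.
Qed.

Lemma is_derive2_const_eq_0 (c t : R) (f' f'' : R -> R) :
  (forall s, is_derive (fun _ : R => c) s (f' s)) -> is_derive f' t (f'' t) ->
  f'' t = 0.
Proof.
  intros H' H''. apply (is_derive_const_eq_0 0 t).
  apply (is_derive_ext f'); [|exact H''].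
  intros s. exact (is_derive_const_eq_0 c s _ (H' s)).
Qed.

Lemma equilibrium_inputs_iff (m J g rho Iw rb ab thb u1 u2 u3 : R) :
  0 < m -> 0 < J -> 0 < rho -> 0 < Iw -> 0 < rb ->
  equilibrium_inputs m J g rho Iw rb ab thb u1 u2 u3 <->
  0 <= u1 /\ u1 * cos (ab + thb) = m * g * cos ab /\
  u2 = 0 /\ u3 = - rho * eq_tension m g ab thb u1.
Proof.
  intros hm hJ hrho hI hr.
  assert (HT : forall u, tension m g rb ab thb 0 0 u = eq_tension m g ab thb u)
    by (intros u; unfold tension, eq_tension; ring).
  split.
  - intros [hu [rd [ad [thd [rdd [add [thdd H]]]]]]].
    assert (Hrd : forall t, is_derive (fun _ : R => rb) t (rd t)) by apply H.
    assert (Had : forall t, is_derive (fun _ : R => ab) t (ad t)) by apply H.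
    assert (Hthd : forall t, is_derive (fun _ : R => thb) t (thd t)) by apply H.
    destruct (H 0) as (_ & Hrdd & _ & Hadd & _ & Hthdd & Er & Ea & Eth).
    rewrite (is_derive2_const_eq_0 _ _ _ _ Hrd Hrdd) in Er.
    rewrite (is_derive2_const_eq_0 _ _ _ _ Had Hadd),
      (is_derive_const_eq_0 _ _ _ (Hrd 0)), (is_derive_const_eq_0 _ _ _ (Had 0)) in Ea.
    rewrite (is_derive2_const_eq_0 _ _ _ _ Hthd Hthdd) in Eth.
    rewrite (is_derive_const_eq_0 _ _ _ (Had 0)), HT in Er.
    split; [exact hu|]. split; [|split].
    + apply Rminus_diag_uniq.
      replace (u1 * cos (ab + thb) - m * g * cos ab) with
        (m * rb * (- (1 / rb) * (2 * 0 * 0 + g * cos ab)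
                   + 1 / (m * rb) * u1 * cos (ab + thb))) by (field; lra).
      rewrite <- Ea. ring.
    + replace u2 with (J * (1 / J * u2)) by (field; lra). rewrite <- Eth. ring.
    + apply Rminus_diag_uniq.
      replace (u3 - - rho * eq_tension m g ab thb u1) with
        (Iw / rho * (rho / Iw * u3 + rho ^ 2 / Iw * eq_tension m g ab thb u1))
        by (field; lra).
      rewrite <- Er. ring.
  - intros (hu & Hbal & -> & ->). split; [exact hu|].
    exists (fun _ => 0), (fun _ => 0), (fun _ => 0),
      (fun _ => 0), (fun _ => 0), (fun _ => 0).
    intros t.
    assert (D : forall c : R, is_derive (fun _ : R => c) t 0)
      by (intros c; apply (is_derive_const (V := R_NormedModule))).
    do 6 (split; [apply D|]).
    rewrite HT. split; [|split].
    + field. lra.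
    + replace (1 / (m * rb) * u1 * cos (ab + thb))
        with (1 / (m * rb) * (u1 * cos (ab + thb))) by ring.
      rewrite Hbal. field. lra.
    + field. lra.
Qed.

Definition feasible_thrust (m g eps a th : R) : Prop :=
  exists u1, 0 <= u1 /\ u1 * cos (a + th) = m * g * cos a /\
             eps < eq_tension m g a th u1.

Lemma attainable_iff (m J g rho Iw eps rb ab thb : R) :
  0 < m -> 0 < J -> 0 < rho -> 0 < Iw ->
  attainable m J g rho Iw eps rb ab thb <->
  0 < rb /\ 0 <= ab <= PI /\ - PI < thb <= PI /\ feasible_thrust m g eps ab thb.
Proof.
  intros hm hJ hrho hI. split.
  - intros [(hr & ha & hth) [u1 [u2 [u3 [EI HT]]]]].
    apply equilibrium_inputs_iff in EI as (hu & Hbal & _); auto.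
    repeat split; auto; try lra. exists u1. auto.
  - intros (hr & ha & hth & [u1 (hu & Hbal & HT)]).
    split; [repeat split; auto; lra|].
    exists u1, 0, (- rho * eq_tension m g ab thb u1).
    split; [apply equilibrium_inputs_iff; auto|exact HT].
Qed.

Lemma eq_tension_balanced (m g a th u1 : R) :
  m * g <> 0 -> cos a <> 0 -> u1 * cos (a + th) = m * g * cos a ->
  eq_tension m g a th u1 = m * g * (tan (a + th) * cos a - sin a).
Proof.
  intros hmg hc Hbal.
  assert (hC : cos (a + th) <> 0).
  { intros h0. rewrite h0, Rmult_0_r in Hbal.
    symmetry in Hbal. apply Rmult_integral in Hbal as [|]; auto. }
  assert (Hu : u1 = m * g * cos a / cos (a + th)) by (rewrite <- Hbal; field; exact hC).
  unfold eq_tension, tan. rewrite Hu. field. exact hC.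
Qed.

Lemma feasible_thrust_nonvertical (m g eps a th : R) :
  0 < m * g -> cos a <> 0 ->
  feasible_thrust m g eps a th <->
  0 < cos a * cos (a + th) /\ eps < m * g * (tan (a + th) * cos a - sin a).
Proof.
  intros hmg hc. split.
  - intros [u1 (hu & Hbal & HT)].
    rewrite eq_tension_balanced in HT by (auto; lra).
    split; [|exact HT].
    assert (hc2 : 0 < cos a * cos a) by (apply Rsqr_pos_lt; exact hc).
    assert (0 < u1 * (cos a * cos (a + th))).
    { replace (u1 * (cos a * cos (a + th))) with (u1 * cos (a + th) * cos a)
        by ring.
      rewrite Hbal. nra. }
    nra.
  - intros [hpos HT].
    assert (hC : cos (a + th) <> 0) by (intros h0; rewrite h0 in hpos; lra).
    exists (m * g * cos a / cos (a + th)).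
    assert (Hbal : m * g * cos a / cos (a + th) * cos (a + th) = m * g * cos a)
      by (field; exact hC).
    split; [|split; [exact Hbal|]].
    + replace (m * g * cos a / cos (a + th))
        with (m * g * (cos a * cos (a + th)) / (cos (a + th) * cos (a + th)))
        by (field; exact hC).
      apply Rlt_le, Rdiv_lt_0_compat; [nra|now apply Rsqr_pos_lt].
    + rewrite eq_tension_balanced by (auto; lra). exact HT.
Qed.

Lemma tension_margin_factor (m g eps a t : R) :
  m * g <> 0 -> cos a <> 0 ->
  m * g * (t * cos a - sin a) - eps
  = m * g * cos a * (t - (eps / (m * g * cos a) + tan a)).
Proof.
  intros hmg hc. apply Rmult_neq_0_reg in hmg as [hm hg].
  unfold tan. field. auto.
Qed.

Lemma feasible_thrust_lt_PI2 (m g eps a th : R) :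
  0 < m * g -> 0 <= a < PI / 2 ->
  (- PI < th <= PI /\ feasible_thrust m g eps a th) <->
  theta_eps m g eps a < th < PI / 2 - a.
Proof.
  intros hmg ha. pose proof PI_RGT_0.
  assert (hc : 0 < cos a) by (apply cos_gt_0; lra).
  unfold theta_eps. destruct (Rlt_dec a (PI / 2)) as [_|]; [|lra].
  set (K := eps / (m * g * cos a) + tan a). pose proof (atan_bound K).
  assert (Hmargin : forall t, eps < m * g * (t * cos a - sin a) <-> K < t).
  { intros t. pose proof (tension_margin_factor m g eps a t ltac:(lra) ltac:(lra)) as E.
    fold K in E.
    assert (0 < m * g * cos a) by nra. split; intros; nra. }
  rewrite feasible_thrust_nonvertical, Hmargin by lra.
  split.
  - intros (hth & hpos & hK).
    assert (hC : 0 < cos (a + th)) by nra.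
    apply cos_gt_0_iff in hC; [|lra].
    apply (atan_lt_iff K (a + th) hC) in hK. lra.
  - intros [h1 h2].
    assert (hx : - (PI / 2) < a + th < PI / 2) by lra.
    split; [lra|split].
    + apply Rmult_lt_0_compat; [lra|]. apply cos_gt_0_iff; lra.
    + apply (atan_lt_iff K (a + th) hx). lra.
Qed.

Lemma feasible_thrust_gt_PI2 (m g eps a th : R) :
  0 < m * g -> PI / 2 < a <= PI ->
  (- PI < th <= PI /\ feasible_thrust m g eps a th) <->
  PI / 2 - a < th < theta_eps m g eps a.
Proof.
  intros hmg ha. pose proof PI_RGT_0.
  assert (hc : cos a < 0) by (apply cos_lt_0; lra).
  unfold theta_eps. destruct (Rlt_dec a (PI / 2)) as [|_]; [lra|].
  set (K := eps / (m * g * cos a) + tan a). pose proof (atan_bound K).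
  assert (Hmargin : forall t, eps < m * g * (t * cos a - sin a) <-> t < K).
  { intros t. pose proof (tension_margin_factor m g eps a t ltac:(lra) ltac:(lra)) as E.
    fold K in E.
    assert (m * g * cos a < 0) by nra. split; intros; nra. }
  rewrite feasible_thrust_nonvertical, Hmargin by lra.
  replace (a + th) with (a + th - PI + PI) by ring.
  rewrite tan_add_PI, neg_cos.
  split.
  - intros (hth & hpos & hK).
    assert (hC : 0 < cos (a + th - PI)) by nra.
    apply cos_gt_0_iff in hC; [|lra].
    apply (lt_atan_iff K (a + th - PI) hC) in hK. lra.
  - intros [h1 h2].
    assert (hx : - (PI / 2) < a + th - PI < PI / 2) by lra.
    split; [lra|split].
    + assert (0 < cos (a + th - PI)) by (apply cos_gt_0_iff; lra). nra.
    + apply (lt_atan_iff K (a + th - PI) hx). lra.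
Qed.

Lemma vertical_balance_tension (m g u1 : R) :
  u1 * cos (PI / 2 + 0) = m * g * cos (PI / 2) /\
  eq_tension m g (PI / 2) 0 u1 = u1 - m * g.
Proof.
  unfold eq_tension. rewrite Rplus_0_r, cos_PI2, sin_PI2. split; ring.
Qed.

Lemma feasible_thrust_vertical (m g eps th : R) :
  0 < m * g -> 0 <= eps ->
  (- PI < th <= PI /\ feasible_thrust m g eps (PI / 2) th) <-> th = 0.
Proof.
  intros hmg heps. pose proof PI_RGT_0. split.
  - intros [hth [u1 (hu & Hbal & HT)]].
    unfold eq_tension in HT.
    rewrite cos_plus, cos_PI2, sin_PI2 in Hbal. rewrite sin_plus, cos_PI2, sin_PI2 in HT.
    assert (hpos : 0 < u1 * cos th) by lra.
    assert (hu1 : 0 < u1) by (destruct hu as [h|<-]; [exact h|lra]).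
    assert (hs : sin th = 0) by (apply (Rmult_eq_reg_l u1); nra).
    assert (hc : 0 < cos th) by nra.
    apply cos_gt_0_iff in hc; [|lra].
    rewrite <- (atan_tan th hc), <- atan_0. f_equal.
    unfold tan. rewrite hs. unfold Rdiv. ring.
  - intros ->. split; [lra|].
    destruct (vertical_balance_tension m g (m * g + eps + 1)) as [Hbal HT].
    exists (m * g + eps + 1). rewrite HT. repeat split; [lra|exact Hbal|lra].
Qed.

Lemma feasible_thrust_iff (m g eps a th : R) :
  0 < m * g -> 0 <= eps -> 0 <= a <= PI ->
  (- PI < th <= PI /\ feasible_thrust m g eps a th) <->
  ((0 <= a < PI / 2 /\ theta_eps m g eps a < th < PI / 2 - a) \/
   (a = PI / 2 /\ th = 0) \/
   (PI / 2 < a <= PI /\ PI / 2 - a < th < theta_eps m g eps a)).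
Proof.
  intros hmg heps ha.
  destruct (total_order_T a (PI / 2)) as [[h | ->] | h].
  - rewrite feasible_thrust_lt_PI2 by lra.
    split; [intros; left; split; [lra|assumption]|].
    intros [[_ H]|[[? _]|[? _]]]; [exact H|lra|lra].
  - rewrite feasible_thrust_vertical by assumption.
    split; [intros; right; left; split; [reflexivity|assumption]|].
    intros [[? _]|[[_ H]|[? _]]]; [lra|exact H|lra].
  - rewrite feasible_thrust_gt_PI2 by lra.
    split; [intros; right; right; split; [lra|assumption]|].
    intros [[? _]|[[? _]|[_ H]]]; [lra|lra|exact H].
Qed.

Theorem proposition1 (m J g rho Iw eps : R)
  (hm : 0 < m) (hJ : 0 < J) (hg : 0 < g) (hrho : 0 < rho) (hI : 0 < Iw)
  (heps : 0 <= eps) :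
  (forall rb ab thb : R,
     attainable m J g rho Iw eps rb ab thb <->
     (0 < rb /\ 0 <= ab <= PI /\
      ((0 <= ab < PI / 2 /\ theta_eps m g eps ab < thb < PI / 2 - ab) \/
       (ab = PI / 2 /\ thb = 0) \/
       (PI / 2 < ab <= PI /\ PI / 2 - ab < thb < theta_eps m g eps ab)))) /\
  (forall rb ab thb u1 u2 u3 : R,
     state_domain rb ab thb -> ab <> PI / 2 ->
     equilibrium_inputs m J g rho Iw rb ab thb u1 u2 u3 ->
     eq_tension m g ab thb u1 = m * g * (tan (ab + thb) * cos ab - sin ab)) /\
  (forall rb thb : R,
     attainable m J g rho Iw eps rb (PI / 2) thb ->
     forall T : R, 0 < T ->
       exists u1 u2 u3 : R,
         equilibrium_inputs m J g rho Iw rb (PI / 2) thb u1 u2 u3 /\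
         eq_tension m g (PI / 2) thb u1 = T).
Proof.
  assert (hmg : 0 < m * g) by nra.
  split; [|split].
  - intros rb ab thb. rewrite attainable_iff by assumption.
    split; intros (hr & ha & Hf); refine (conj hr (conj ha _));
      [apply -> feasible_thrust_iff | apply <- feasible_thrust_iff]; assumption.
  - intros rb ab thb u1 u2 u3 (hr & ha & _) hne EI.
    apply equilibrium_inputs_iff in EI as (_ & Hbal & _); [|assumption..].
    apply eq_tension_balanced; [lra|now apply cos_neq_0_of_neq_PI2|exact Hbal].
  - intros rb thb Hatt T hT.
    apply attainable_iff in Hatt as (hr & _ & Hf); [|assumption..].
    apply feasible_thrust_vertical in Hf as ->; [|assumption..].
    destruct (vertical_balance_tension m g (T + m * g)) as [Hbal HT].
    exists (T + m * g), 0, (- rho * eq_tension m g (PI / 2) 0 (T + m * g)).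
    split; [|rewrite HT; ring].
    apply equilibrium_inputs_iff; try assumption.
    split; [lra|split; [exact Hbal|split; reflexivity]].
Qed.
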